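(* Let $p\in[1,\infty]$, let $(U_u)_{u\in[0,T]}$ be concave non-decreasing functions $U_u:\mathbb{R}\to[-\infty,+\infty)$ (not identically $-\infty$), and $(B_{tu})_{0\le t\le u\le T}$ real numbers, and let $(\rho^{U,B}_{tu})_{t,u}$ be the associated fully-dynamic shortfall risk measure. If for all $0\le t\le u\le v\le T$ and all $x\in\mathbb{R}$ one has $U_v(x)-B_{tv}\le U_u(x)-B_{tu}$, then $(\rho^{U,B}_{tu})$ satisfies h-longevity: $\rho^{U,B}_{tv}(X)\ge\rho^{U,B}_{tu}(X)$ for all $t\le u\le v$ and $X\in L^p(\mathcal{F}_u)$. If moreover $U_u$ and $B_{tu}$ do not depend on $u$, then $(\rho^{U,B}_{tu})$ satisfies the restriction property $\rho^{U,B}_{tu}(X)=\rho^{U,B}_{tv}(X)$ for all $t\le u\le v$, $X\in L^p(\mathcal{F}_u)$.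
   Context: $(\mathcal{F}_t)_{t\in[0,T]}$ is a filtration on a probability space $(\Omega,\mathcal{F},P)$. The fully-dynamic shortfall risk measure is $$\rho^{U,B}_{tu}(X)=\operatorname{ess.inf}\{m_t\in L^p(\mathcal{F}_t):E[U_u(X+m_t)\mid\mathcal{F}_t]\ge B_{tu}\},\qquad X\in L^p(\mathcal{F}_u),$$ with $\operatorname{ess.inf}\emptyset=+\infty$; conditional expectations are taken in the extended sense in $[-\infty,\infty)$ (the positive part is integrable since a concave function has an affine majorant). *)

From HB Require Import structures.
From mathcomp Require Import all_boot all_order all_algebra.
From mathcomp Require Import all_classical all_reals all_analysis measurable_realfun.
Set Implicit Arguments. Unset Strict Implicit. Unset Printing Implicit Defensive.
Import Order.TTheory GRing.Theory Num.Theory.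
Local Open Scope classical_set_scope.
Local Open Scope ring_scope.

Section Shortfall.
Context d (Omega : measurableType d) (R : realType).
Variable P : probability Omega R.

Definition filtration (T : R) (F : R -> set (set Omega)) :=
  (forall t, (0 <= t <= T)%R -> sigma_algebra setT (F t)) /\
  (forall t, (0 <= t <= T)%R -> F t `<=` measurable) /\
  (forall s t, 0 <= s -> s <= t -> t <= T -> F s `<=` F t).

Definition Gmeas_R (G : set (set Omega)) (X : Omega -> R) :=
  forall B : set R, measurable B -> G (X @^-1` B).
Definition Gmeas_eR (G : set (set Omega)) (Y : Omega -> \bar R) :=
  forall B : set (\bar R), measurable B -> G (Y @^-1` B).

Definition Lp (p : \bar R) (G : set (set Omega)) (X : Omega -> R) :=
  Gmeas_R G X /\ ('N[P]_p[EFin \o X] < +oo)%E.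

Definition cond_exp (G : set (set Omega)) (Z Y : Omega -> \bar R) :=
  Gmeas_eR G Y /\
  (\int[P]_x maxe (Y x) 0%E < +oo)%E /\
  (forall A, G A -> (\int[P]_(x in A) Y x = \int[P]_(x in A) Z x)%E).

(** Y is (a version of) the essential infimum of the family S of real
    random variables (ess.inf of the empty family is +oo). *)
Definition is_essinf (S : set (Omega -> R)) (Y : Omega -> \bar R) :=
  measurable_fun setT Y /\
  (forall m, S m -> {ae P, forall w, (Y w <= (m w)%:E)%E}) /\
  (forall Z : Omega -> \bar R, measurable_fun setT Z ->
     (forall m, S m -> {ae P, forall w, (Z w <= (m w)%:E)%E}) ->
     {ae P, forall w, (Z w <= Y w)%E}).

Definition admissible_utility (U : R -> \bar R) :=
  (forall x, U x != +oo%E) /\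
  (exists x, U x != -oo%E) /\
  (forall x y, x <= y -> (U x <= U y)%E) /\
  (forall x y l, (0 <= l <= 1)%R ->
     (l%:E * U x + ((1 - l)%R)%:E * U y <= U (l * x + (1 - l) * y)%R)%E).

Definition shortfall_set (p : \bar R) (F : R -> set (set Omega))
    (U : R -> R -> \bar R) (B : R -> R -> R) (t u : R) (X : Omega -> R) :
    set (Omega -> R) :=
  [set m | Lp p (F t) m /\
     exists C, cond_exp (F t) (fun w => U u (X w + m w)) C /\
       {ae P, forall w, ((B t u)%:E <= C w)%E}].

Definition shortfall_rho (p : \bar R) (F : R -> set (set Omega))
    (U : R -> R -> \bar R) (B : R -> R -> R) (t u : R) (X : Omega -> R)
    (Y : Omega -> \bar R) :=
  is_essinf (shortfall_set p F U B t u X) Y.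

End Shortfall.

From HB Require Import structures.
From mathcomp Require Import all_boot all_order all_algebra.
From mathcomp Require Import all_classical all_reals all_analysis measurable_realfun.
From mathcomp Require Import ring lra.
Set Implicit Arguments. Unset Strict Implicit. Unset Printing Implicit Defensive.
Import Order.TTheory GRing.Theory Num.Theory.
Local Open Scope classical_set_scope.
Local Open Scope ring_scope.

(* If [U_v - B_tv <= U_u - B_tu], every [m] acceptable at horizon [v] is
   acceptable at horizon [u], because
   [E[U_u(X + m) | F_t] >= E[U_v(X + m) | F_t] + B_tu - B_tv >= B_tu];
   an essential infimum over a smaller family is larger. When [U] and [B] do
   not depend on the horizon the two acceptance sets coincide. The analytic
   work is the existence of [E[U_u(X + m) | F_t]]: the concave [U_u] grows at
   most affinely, so the positive part of [U_u(X + m)] is integrable, and its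
   negative part is controlled by that of [U_v(X + m)], whose expectation is at
   least [B_tv]; the conditional expectation is then a Radon-Nikodym density. *)

(* Intersecting with [measurable] makes the sets of [sub_sigma G] measurable in
   [Omega] without assuming [G `<=` measurable]. *)
Notation sub_sigma G := (g_sigma_algebraType (G `&` measurable)).

Section SubSigmaAlgebra.
Context d (Omega : measurableType d) (R : realType).

Definition sub_sigma_id (G : set (set Omega)) : Omega -> sub_sigma G := id.

Lemma sub_sigma_measurable G (A : set (sub_sigma G)) :
  measurable A -> measurable (A : set Omega).
Proof.
move=> mA; apply: (smallest_sub _ _ mA); first exact: sigma_algebra_measurable.
by move=> B [].
Qed.

Lemma measurable_sub_sigma_id G : measurable_fun setT (sub_sigma_id G).
Proof. by move=> _ A mA; rewrite setTI; exact: (@sub_sigma_measurable G A). Qed.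

HB.instance Definition _ G :=
  isMeasurableFun.Build _ _ _ _ (sub_sigma_id G) (@measurable_sub_sigma_id G).

Variable P : {measure set Omega -> \bar R}.

Definition integral_sub_sigma G (Z : Omega -> \bar R) of P.-integrable setT Z :
    set (sub_sigma G) -> \bar R :=
  fun A => (\int[P]_(x in A) Z x)%E.
Arguments integral_sub_sigma G [Z].

Section integral_sub_sigma_charge.
Variables (G : set (set Omega)) (Z : Omega -> \bar R) (intZ : P.-integrable setT Z).

Let integral_sub_sigma0 : integral_sub_sigma G intZ set0 = 0%E.
Proof. by rewrite /integral_sub_sigma integral_set0. Qed.

Let integral_sub_sigma_fin_num A :
  measurable A -> integral_sub_sigma G intZ A \is a fin_num.
Proof.
move=> /sub_sigma_measurable mA.
by apply: integrable_fin_num => //; exact: integrableS intZ.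
Qed.

Let integral_sub_sigma_sigma_additive :
  semi_sigma_additive (integral_sub_sigma G intZ).
Proof.
move=> A mA tA mUA.
exact: (@charge_semi_sigma_additive _ _ _ (induced_charge intZ) A
  (fun n => sub_sigma_measurable (mA n)) tA (sub_sigma_measurable mUA)).
Qed.

HB.instance Definition _ := isCharge.Build _ _ _ (integral_sub_sigma G intZ)
  integral_sub_sigma0 integral_sub_sigma_fin_num integral_sub_sigma_sigma_additive.

End integral_sub_sigma_charge.
End SubSigmaAlgebra.
Arguments integral_sub_sigma {d Omega R P} G [Z].

Section ConditionalExpectation.
Context d (Omega : measurableType d) (R : realType) (P : probability Omega R).
Local Open Scope ereal_scope.

(* The conditional expectation is the Radon-Nikodym density of [A |-> int_A Z]
   with respect to the restriction of [P] to [G]. *)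
Lemma exists_cond_exp (G : set (set Omega)) (hG : sigma_algebra setT G)
    (hGm : G `<=` measurable) (Z : Omega -> \bar R) (intZ : P.-integrable setT Z) :
  exists f : Omega -> \bar R, [/\ (forall x, f x \is a fin_num), Gmeas_eR G f,
    P.-integrable setT f &
    forall A, G A -> \int[P]_(x in A) f x = \int[P]_(x in A) Z x].
Proof.
pose mu := distribution P (sub_sigma_id G).
have nu_ac_mu : integral_sub_sigma G intZ `<< mu.
  apply/null_content_dominatesP => A mA muA0.
  apply: null_set_integral => //; first exact: sub_sigma_measurable.
  by apply: measurable_funS (measurable_int _ intZ) => //; exact: sub_sigma_measurable.
pose f := @Radon_Nikodym _ (sub_sigma G) R (integral_sub_sigma G intZ) mu.
have fint : mu.-integrable setT f by exact: Radon_Nikodym_integrable.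
have mfG : measurable_fun setT f by exact: measurable_int fint.
have mf : measurable_fun [set: Omega] (f : Omega -> \bar R).
  move=> _ B mB; have := mfG measurableT B mB; rewrite !setTI.
  exact: (@sub_sigma_measurable _ _ G).
have fintP : P.-integrable setT (f : Omega -> \bar R).
  apply/integrableP; split => //.
  have := (integrableP _ _ _ fint).2.
  rewrite ge0_integral_pushforward // ?abse_ge0; first exact: measurableT_comp.
exists f; split => //.
- by move=> x; exact: Radon_Nikodym_fin_num.
- move=> B mB; have := mfG measurableT B mB; rewrite setTI.
  by apply: (smallest_sub hG) => A [].
- move=> A GA.
  have mA : measurable (A : set (sub_sigma G)).
    by apply: sub_gen_smallest; split => //; exact: hGm.
  rewrite -[RHS]/(integral_sub_sigma G intZ A) (Radon_Nikodym_integral nu_ac_mu mA).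
  rewrite integral_pushforward //.
  by apply: integrableS fintP => //; exact: hGm.
Qed.
End ConditionalExpectation.

Section AdmissibleUtility.
Context (R : realType).

Lemma concave_chord_le (x0 x r0 r1 y : R) : 0 < x - x0 ->
  (x - x0)^-1 * y + (1 - (x - x0)^-1) * r0 <= r1 ->
  y <= r0 + (x - x0) * (r1 - r0).
Proof.
move=> x0x hchord; have := ler_wpM2l (ltW x0x) hchord.
have -> : (x - x0) * ((x - x0)^-1 * y + (1 - (x - x0)^-1) * r0) =
    y + (x - x0 - 1) * r0 by field; rewrite gt_eqF.
lra.
Qed.

Local Open Scope ereal_scope.

Lemma admissible_utility_measurable (U : R -> \bar R) :
  admissible_utility U -> measurable_fun setT U.
Proof.
move=> [_ [_ [Umon _]]].
apply: (measurability (@ErealGenCInfty.G R)) => [|/= _ [_ [r ->] <-]].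
  exact: ErealGenCInfty.measurableE.
apply: measurableI => //; apply: is_interval_measurable => s t /=.
rewrite !in_itv/= !andbT => fs ft u /andP[su ut].
by rewrite in_itv/= andbT (le_trans fs)// Umon.
Qed.

(* Concavity bounds [U] above [x0 + 1] by its chord through [x0] and
   [x0 + 1], and monotonicity bounds it below [x0 + 1] by [U (x0 + 1)]. *)
Lemma admissible_utility_affine_bound (U : R -> \bar R) : admissible_utility U ->
  exists a b : R, (0 <= b)%R /\ forall x, U x <= (a + b * `|x|)%:E.
Proof.
move=> [Unoo [[x0 Ux0] [Umon Ucc]]].
have Ux0_fin : U x0 \is a fin_num by rewrite fin_numE Ux0 Unoo.
have Ux1_fin : U (x0 + 1)%R \is a fin_num.
  rewrite fin_numE Unoo andbT; apply: contraNneq Ux0 => Ux1.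
  by rewrite -leeNy_eq -Ux1 Umon// lerDl.
set r0 := fine (U x0); set r1 := fine (U (x0 + 1)%R).
have r01 : (r0 <= r1)%R by rewrite -lee_fin !fineK// Umon// lerDl.
exists (`|r0| + `|x0| * (r1 - r0) + `|r1|)%R, (r1 - r0)%R.
split=> [|x]; first by rewrite subr_ge0.
have [xle|xgt] := leP x (x0 + 1)%R.
  apply: (le_trans (Umon _ _ xle)); rewrite -(fineK Ux1_fin) lee_fin -/r1.
  have : (0 <= r1 - r0)%R by rewrite subr_ge0.
  have := normr_ge0 x0; have := normr_ge0 x; have := ler_norm r1.
  have := normr_ge0 r0; nra.
have x0x : (0 < x - x0)%R by rewrite subr_gt0 (lt_trans _ xgt)// ltrDl.
have l01 : (0 <= (x - x0)^-1 <= 1)%R by rewrite invr_ge0 ltW//= invf_le1//; lra.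
have := Ucc x x0 _ l01.
have -> : ((x - x0)^-1 * x + (1 - (x - x0)^-1) * x0 = x0 + 1)%R.
  by rewrite mulrBl mul1r addrCA -mulrBr mulVf ?gt_eqF// addrC.
rewrite -(fineK Ux0_fin) -(fineK Ux1_fin).
case: (U x) (Unoo x) => [y _| //|_ _]; last by rewrite leNye.
rewrite -!EFinM -EFinD !lee_fin => /(concave_chord_le x0x) hy.
apply: (le_trans hy); rewrite -/r0 -/r1.
have : (0 <= (`|x| + `|x0| - (x - x0)) * (r1 - r0))%R.
  rewrite mulr_ge0 ?subr_ge0//.
  by have := ler_norm x; have := ler_norm (- x0); rewrite normrN; lra.
have := ler_norm r0; have := normr_ge0 r1; nra.
Qed.

End AdmissibleUtility.

Section IntegralBounds.
Context d (Omega : measurableType d) (R : realType).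
Local Open Scope ereal_scope.

Lemma integrable_sandwich (mu : {measure set Omega -> \bar R}) (D : set Omega)
    (f g h : Omega -> \bar R) :
  measurable D -> measurable_fun D f ->
  mu.-integrable D g -> mu.-integrable D h ->
  (forall x, D x -> g x <= f x <= h x) -> mu.-integrable D f.
Proof.
move=> mD mf ig ih gfh.
apply: (le_integrable mD mf _ (integrableD mD (integrable_abse ig) (integrable_abse ih))).
move=> x Dx; have /andP[gf fh] := gfh x Dx.
rewrite [leRHS]gee0_abs ?adde_ge0 ?abse_ge0//=.
have [f0|f0] := leP 0 (f x).
- rewrite gee0_abs// lee_paddl ?abse_ge0//.
  exact: le_trans fh (lee_abs _).
- rewrite lte0_abs// lee_paddr ?abse_ge0//.
  by rewrite -abseN (le_trans _ (lee_abs _))// leeN2.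
Qed.

Lemma integrable_funepos_integral_neqNy (mu : {measure set Omega -> \bar R})
    (D : set Omega) (f : Omega -> \bar R) :
  measurable D -> measurable_fun D f -> mu.-integrable D f^\+ ->
  \int[mu]_(x in D) f x != -oo -> mu.-integrable D f.
Proof.
move=> mD mf ifp intf.
have ifn : mu.-integrable D f^\-.
  apply/integrableP; split; first exact: measurable_funeneg.
  under eq_integral do rewrite gee0_abs ?funeneg_ge0//.
  rewrite ltey; apply: contra intf => /eqP ifnoo.
  by rewrite integralE ifnoo -(fineK (integrable_fin_num mD ifp)) addeNy.
by rewrite (funeposneg f); exact: integrableB.
Qed.

Variable mu : {finite_measure set Omega -> \bar R}.

Lemma integral_ge_ae_ge (A : set Omega) (g : Omega -> \bar R) (b : R) :
  measurable A -> measurable_fun setT g ->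
  {ae mu, forall w, b%:E <= g w} -> b%:E * mu A <= \int[mu]_(x in A) g x.
Proof.
move=> mA mg hae.
have mgA : measurable_fun A g by exact: measurable_funTS.
suff key c1 c2 : (0 <= c1)%R -> (0 <= c2)%R -> (c1 - c2 = b)%R ->
    {ae mu, forall w, A w -> c1%:E <= g^\+ w} ->
    {ae mu, forall w, A w -> g^\- w <= c2%:E} ->
    b%:E * mu A <= \int[mu]_(x in A) g x.
  have [b0|b0] := leP 0%R b.
  - apply: (key b 0%R) => //; first by rewrite subr0.
    + by apply: filterS hae => w bw _; rewrite funeposE le_max bw.
    + apply: filterS hae => w bw _; rewrite funenegE ge_max lexx andbT.
      by rewrite leeNl oppe0 (le_trans _ bw)// lee_fin.
  - apply: (key 0%R (- b)%R) => //; first by rewrite oppr_ge0 ltW.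
    + by rewrite sub0r opprK.
    + by apply: filterS hae => w bw _; rewrite funeposE le_max lexx orbT.
    + apply: filterS hae => w bw _; rewrite funenegE ge_max.
      apply/andP; split; last by rewrite lee_fin oppr_ge0 ltW.
      by rewrite EFinN leeN2.
move=> c10 c20 cb h1 h2.
rewrite integralE -cb EFinB muleBl ?fin_num_measure//.
apply: leeB; rewrite -(integral_cst mu mA); apply: ae_ge0_le_integral => //.
- exact: measurable_funepos.
- exact: measurable_funeneg.
Qed.

(* On the sets [A] of [G], a [G]-measurable real-valued [f] can only fall below
   [a] on a null set, since on [{f < a}] the integral of [a - f >= 0] is [<= 0]. *)
Lemma ae_ge_integral_ge (G : set (set Omega)) (hGm : G `<=` measurable)
    (f : Omega -> \bar R) (a : R) :
  (forall x, f x \is a fin_num) -> Gmeas_eR G f -> mu.-integrable setT f ->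
  (forall A, G A -> a%:E * mu A <= \int[mu]_(x in A) f x) ->
  {ae mu, forall w, a%:E <= f w}.
Proof.
move=> ffin fG fint intf_ge.
pose E := f @^-1` `]-oo, a%:E[%classic.
have GE : G E by apply: fG; exact: emeasurable_itv.
have mE : measurable E by exact: hGm.
have fintE : mu.-integrable E f by exact: integrableS fint.
have cint : mu.-integrable E (EFin \o cst a) by exact: finite_measure_integrable_cst.
have int_gap0 : \int[mu]_(x in E) `|f x - a%:E| = 0.
  apply/eqP; rewrite eq_le integral_ge0 ?andbT//.
  rewrite (eq_integral (EFin \o cst a \- f)); last first.
    move=> w; rewrite inE /E /= in_itv /= -(fineK (ffin w)) lte_fin => fw.
    by rewrite /= -!EFinB ltr0_norm ?subr_lt0// opprB.
  rewrite integralB// sube_le0.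
  have -> : \int[mu]_(x in E) (EFin \o cst a) x = a%:E * mu E.
    by rewrite -(integral_cst mu mE).
  exact: intf_ge.
have mfa : measurable_fun E (fun w => f w - a%:E).
  by apply: emeasurable_funB => //; exact: measurable_funTS (measurable_int _ fint).
apply: filterS ((ae_eq_integral_abs mu mE mfa).1 int_gap0) => w gap0.
rewrite leNgt; apply/negP => fwa.
have Ew : E w by rewrite /E /= in_itv.
move: (gap0 Ew) fwa => /=; rewrite -(fineK (ffin w)) -EFinB => /eqP.
by rewrite eqe subr_eq0 lte_fin => /eqP ->; rewrite ltxx.
Qed.

End IntegralBounds.

Section ShortfallAcceptanceSets.
Context d (Omega : measurableType d) (R : realType) (P : probability Omega R).
Local Open Scope ereal_scope.

Lemma Gmeas_R_measurable (G : set (set Omega)) (X : Omega -> R) :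
  G `<=` measurable -> Gmeas_R G X -> measurable_fun setT X.
Proof. by move=> hGm hX _ A mA; rewrite setTI; exact/hGm/hX. Qed.

Lemma Gmeas_eR_measurable (G : set (set Omega)) (Y : Omega -> \bar R) :
  G `<=` measurable -> Gmeas_eR G Y -> measurable_fun setT Y.
Proof. by move=> hGm hY _ A mA; rewrite setTI; exact/hGm/hY. Qed.

Lemma Lp_integrable (p : \bar R) (G : set (set Omega)) (Y : Omega -> R) :
  1 <= p -> G `<=` measurable -> Lp P p G Y -> P.-integrable setT (EFin \o Y).
Proof.
move=> hp hGm [hY Yp]; apply/Lfun1_integrable.
apply: (Lfun_subset (lexx _) hp (fin_num_measure _ _ measurableT) hp).
by apply/andP; split; rewrite inE//; exact: Gmeas_R_measurable hY.
Qed.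

Lemma integrable_utility_funepos (U : R -> \bar R) (Y : Omega -> R) :
  admissible_utility U -> P.-integrable setT (EFin \o Y) ->
  P.-integrable setT (U \o Y)^\+.
Proof.
move=> aU iY.
have mY : measurable_fun setT Y by exact/measurable_EFinP/(measurable_int _ iY).
have [a [b [b0 Uab]]] := admissible_utility_affine_bound aU.
have iab : P.-integrable setT (fun w => (a + b * `|Y w|)%:E).
  apply: eq_integrable (integrableD measurableT
    (finite_measure_integrable_cst P a measurableT)
    (integrableZl measurableT b (integrable_norm iY))) => //.
apply: le_integrable iab => //.
  by apply/measurable_funepos/measurableT_comp => //; exact: admissible_utility_measurable.
move=> w _; rewrite gee0_abs ?funepos_ge0// funeposE ge_max abse_ge0 andbT.
exact: le_trans (Uab _) (lee_abs _).
Qed.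

Lemma exists_cond_exp_ae_ge (G : set (set Omega)) (Z : Omega -> \bar R) (b : R) :
  sigma_algebra setT G -> G `<=` measurable -> P.-integrable setT Z ->
  (forall A, G A -> b%:E * P A <= \int[P]_(x in A) Z x) ->
  exists C, cond_exp P G Z C /\ {ae P, forall w, b%:E <= C w}.
Proof.
move=> hG hGm iZ intZ_ge.
have [f [ffin fG fint fZ]] := exists_cond_exp hG hGm iZ.
exists f; split; last first.
  by apply: (ae_ge_integral_ge hGm ffin fG fint) => A GA; rewrite fZ//; exact: intZ_ge.
split=> //; split=> //.
have := integrable_lty measurableT (integrable_funepos measurableT fint).
by under eq_integral do rewrite funeposE.
Qed.

Lemma cond_exp_integral_ge (G : set (set Omega)) (Z C : Omega -> \bar R) (b : R) :
  G `<=` measurable -> cond_exp P G Z C -> {ae P, forall w, b%:E <= C w} ->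
  forall A, G A -> b%:E * P A <= \int[P]_(x in A) Z x.
Proof.
move=> hGm [CG [_ CZ]] bC A GA; rewrite -CZ//.
by apply: integral_ge_ae_ge bC; [exact: hGm | exact: Gmeas_eR_measurable CG].
Qed.

Lemma lee_subr_shift (x y : \bar R) (bv bu : R) :
  x - bv%:E <= y - bu%:E -> x + (bu - bv)%:E <= y.
Proof.
case: x => [x| |]; case: y => [y| |] //=; rewrite ?leey ?leNye//.
by rewrite -!EFinB -EFinD !lee_fin; lra.
Qed.

End ShortfallAcceptanceSets.

Section ShortfallMonotonicity.
Context d (Omega : measurableType d) (R : realType) (P : probability Omega R).
Local Open Scope ereal_scope.

Lemma shortfall_set_subset (p : \bar R) (F : R -> set (set Omega))
    (U : R -> R -> \bar R) (B : R -> R -> R) (t u v : R) (X : Omega -> R) :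
  1 <= p -> sigma_algebra setT (F t) -> F t `<=` measurable ->
  admissible_utility (U u) -> admissible_utility (U v) ->
  (forall x, U v x - (B t v)%:E <= U u x - (B t u)%:E) ->
  P.-integrable setT (EFin \o X) ->
  shortfall_set P p F U B t v X `<=` shortfall_set P p F U B t u X.
Proof.
move=> hp hFt hFtm aU aV UB iX m [hm [C [hC hCb]]].
pose c := (B t u - B t v)%R.
have iXm : P.-integrable setT (EFin \o (fun w => X w + m w)%R).
  exact: eq_integrable (integrableD measurableT iX (Lp_integrable hp hFtm hm)).
have mXm : measurable_fun setT (fun w => X w + m w)%R.
  exact/measurable_EFinP/(measurable_int _ iXm).
pose Zu w := U u (X w + m w)%R; pose Zv w := U v (X w + m w)%R.
have mZu : measurable_fun setT Zu.
  exact: measurableT_comp (admissible_utility_measurable aU) mXm.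
have mZv : measurable_fun setT Zv.
  exact: measurableT_comp (admissible_utility_measurable aV) mXm.
have intZv_ge := cond_exp_integral_ge hFtm hC hCb.
have Ft_setT : F t setT by case: hFt => Ft0 FtD _; rewrite -(setD0 setT); exact: FtD.
have iZv : P.-integrable setT Zv.
  apply: integrable_funepos_integral_neqNy => //.
    exact: integrable_utility_funepos aV iXm.
  have := intZv_ge _ Ft_setT; rewrite probability_setT mule1.
  by apply: contraTneq => ->; rewrite leeNy_eq.
have ic : P.-integrable setT (EFin \o cst c) by exact: finite_measure_integrable_cst.
have iZvc : P.-integrable setT (Zv \+ (EFin \o cst c)) by exact: integrableD.
have iZu : P.-integrable setT Zu.
  apply: integrable_sandwich mZu iZvc (integrable_utility_funepos aU iXm) _ => //.
  move=> w _; rewrite funeposE le_max lexx andbT.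
  exact: lee_subr_shift (UB _).
split=> //; apply: exists_cond_exp_ae_ge => // A FtA.
have mA : measurable A by exact: hFtm.
apply: (@le_trans _ _ (\int[P]_(x in A) (Zv \+ (EFin \o cst c)) x)); last first.
  by apply: le_integral => //; [exact: integrableS iZvc | exact: integrableS iZu |
    move=> w _; exact: lee_subr_shift (UB _)].
rewrite integralD//; [|exact: integrableS iZv|exact: integrableS ic].
have -> : (B t u)%:E * P A = (B t v)%:E * P A + c%:E * P A.
  by rewrite -muleDl ?fin_num_measure// -EFinD /c addrC subrK.
apply: leeD; first exact: intZv_ge.
by rewrite -(integral_cst P mA).
Qed.

Lemma is_essinf_le_subset (S S' : set (Omega -> R)) (Y Y' : Omega -> \bar R) :
  S' `<=` S -> is_essinf P S Y -> is_essinf P S' Y' -> {ae P, forall w, Y w <= Y' w}.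
Proof. by move=> SS [mY [YS _]] [_ [_ Y'max]]; apply: Y'max => // m /SS; exact: YS. Qed.

Lemma is_essinf_ae_eq (S : set (Omega -> R)) (Y Y' : Omega -> \bar R) :
  is_essinf P S Y -> is_essinf P S Y' -> {ae P, forall w, Y w = Y' w}.
Proof.
move=> hY hY'.
apply: filterS2 (is_essinf_le_subset (@subset_refl _ S) hY hY')
  (is_essinf_le_subset (@subset_refl _ S) hY' hY) => w YY' Y'Y.
by apply/eqP; rewrite eq_le YY' Y'Y.
Qed.

End ShortfallMonotonicity.

Unset Implicit Arguments.

Theorem mainTheorem8 (d : measure_display) (Omega : measurableType d)
  (R : realType) (P : probability Omega R) (T : R)
  (F : R -> set (set Omega)) (hF : filtration T F)
  (p : \bar R) (hp : (1 <= p)%E)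
  (U : R -> R -> \bar R) (hU : forall u, (0 <= u <= T)%R -> admissible_utility (U u))
  (B : R -> R -> R) :
  ((forall t u v x, 0 <= t -> t <= u -> u <= v -> v <= T ->
      (U v x - (B t v)%:E <= U u x - (B t u)%:E)%E) ->
   forall t u v, 0 <= t -> t <= u -> u <= v -> v <= T ->
   forall X, Lp P p (F u) X ->
   forall Yu Yv, shortfall_rho P p F U B t u X Yu ->
                 shortfall_rho P p F U B t v X Yv ->
   {ae P, forall w, (Yu w <= Yv w)%E})
  /\
  ((forall u v, (0 <= u <= T)%R -> (0 <= v <= T)%R -> U u = U v) ->
   (forall t u v, 0 <= t -> t <= u -> u <= T -> t <= v -> v <= T -> B t u = B t v) ->
   forall t u v, 0 <= t -> t <= u -> u <= v -> v <= T ->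
   forall X, Lp P p (F u) X ->
   forall Yu Yv, shortfall_rho P p F U B t u X Yu ->
                 shortfall_rho P p F U B t v X Yv ->
   {ae P, forall w, Yu w = Yv w}).
Proof.
have [Fsigma [Fmeas _]] := hF.
split=> [UB | Uconst Bconst] t u v t0 tu uv vT X hX Yu Yv hYu hYv.
- have u0T : (0 <= u <= T)%R by rewrite (le_trans t0 tu) (le_trans uv vT).
  have v0T : (0 <= v <= T)%R by rewrite (le_trans t0 (le_trans tu uv)) vT.
  have t0T : (0 <= t <= T)%R by rewrite t0 (le_trans tu (le_trans uv vT)).
  apply: is_essinf_le_subset hYu hYv.
  apply: shortfall_set_subset (hU u u0T) (hU v v0T) _ _ => //.
  + exact: Fsigma.
  + exact: Fmeas.
  + by move=> x; exact: UB.
  + exact: Lp_integrable hp (Fmeas u u0T) hX.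
- have u0T : (0 <= u <= T)%R by rewrite (le_trans t0 tu) (le_trans uv vT).
  have v0T : (0 <= v <= T)%R by rewrite (le_trans t0 (le_trans tu uv)) vT.
  apply: is_essinf_ae_eq hYu _.
  rewrite /shortfall_rho /shortfall_set (Uconst u v u0T v0T).
  by rewrite (Bconst t u v t0 tu (le_trans uv vT) (le_trans tu uv) vT).
Qed.
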